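(* Let $\Phi$ satisfy (C.1)--(C.3). Any crossover design which is $\phi_1$-optimal for $\Phi$ under the model with independent homoscedastic errors is still $\phi_1$-optimal for the same $\Phi$ when the within-subject covariance matrix of the errors is of the form $\Sigma=I_p+\eta1_p'+1_p\eta'$ for an arbitrary vector $\eta\in\mathbb R^p$ (in particular for compound symmetry $\Sigma=I_p+bJ_p$, $b\in\mathbb R$).
   Context: A crossover design $d$ with $p$ periods, $t$ treatments, $n$ subjects assigns treatment $d(k,u)$ to subject $u$ in period $k$; responses follow $Y_d=1_{np}\mu+Z\pi+U\varsigma+T_d\tau+F_d\gamma+\varepsilon$, with $Z=1_n\otimes I_p$, $U=I_n\otimes1_p$, $T_d$ the treatment incidence matrix and $F_d$ the carryover incidence matrix (rows ordered by subject then period; carryover row in period 1 is zero). Dropout: $l_u\in\{1,\dots,p\}$ is the number of periods subject $u$ stays (no re-entry), $l_1,\dots,l_n$ i.i.d. with $P(l_u=k)=a_k$, independent of design and outcomes; only the first $l_u$ responses of subject $u$ are observed. $I^k_{ij}$ is the $i\times j$ matrix with $I_k$ in its upper-left block, zeros elsewhere; $M=\mathrm{diag}(I^{l_1}_{l_1p},\dots,I^{l_n}_{l_np})$; $\mathrm{pr}^\perp(G)=I-G(G'G)^-G'$. The within-subject error covariance is a positive definite $p\times p$ matrix $\Sigma$ (errors of distinct subjects independent); $\Sigma_k$ is its upper-left $k\times k$ submatrix and $W=\mathrm{diag}(\Sigma_{l_1}^{-1},\dots,\Sigma_{l_n}^{-1})$. Define $O_\Sigma=M'W^{1/2}\mathrm{pr}^\perp([W^{1/2}MZ|W^{1/2}MU])W^{1/2}M$,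 $C_{d11}(l)=T_d'O_\Sigma T_d$, $C_{d12}(l)=T_d'O_\Sigma F_d=C_{d21}(l)'$, $C_{d22}(l)=F_d'O_\Sigma F_d$, $C_{dij}=\mathbb E\,C_{dij}(l)$ and $C_d=C_{d11}-C_{d12}C_{d22}^-C_{d21}$; the homoscedastic model is $\Sigma=I_p$. A criterion $\Phi$ is a real function on $t\times t$ nonnegative definite matrices with (C.1) concave, (C.2) $\Phi(S'CS)=\Phi(C)$ for permutation matrices $S$, (C.3) $b\mapsto\Phi(bC)$ nondecreasing on $b>0$. $\phi_1(d)=\Phi(C_d)$; a design is $\phi_1$-optimal if it maximizes $\phi_1$ over all designs with the same $p,t,n$ and dropout distribution. *)

From HB Require Import structures.
From mathcomp Require Import all_boot all_order all_algebra all_fingroup.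
From mathcomp Require Import reals.
From Stdlib Require Import ClassicalEpsilon.
Set Implicit Arguments. Unset Strict Implicit. Unset Printing Implicit Defensive.
Import Order.TTheory GRing.Theory Num.Theory.
Local Open Scope ring_scope.

Section Crossover.
Variable R : realType.

Definition nnd m (A : 'M[R]_m) : Prop :=
  A^T = A /\ forall x : 'rV[R]_m, 0 <= (x *m A *m x^T) 0 0.
Definition posdef m (A : 'M[R]_m) : Prop :=
  A^T = A /\ forall x : 'rV[R]_m, x != 0 -> 0 < (x *m A *m x^T) 0 0.

(* the (symmetric nonnegative definite) square root A^{1/2}; chosen by
   classical choice, it is the unique such matrix whenever A is nnd *)
Definition msqrt m (A : 'M[R]_m) : 'M[R]_m :=
  epsilon (inhabits 0) (fun S : 'M[R]_m => nnd S /\ S *m S = A).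

(* generalized inverse: MathComp's pinvmx satisfies A A^- A = A *)
Definition ginv m k (A : 'M[R]_(m, k)) : 'M[R]_(k, m) := pinvmx A.

Definition prperp m k (G : 'M[R]_(m, k)) : 'M[R]_m :=
  1%:M - G *m ginv (G^T *m G) *m G^T.

(* a design: d u k = treatment of subject u in period k *)
Definition design (n p t : nat) := 'I_n -> 'I_p -> 'I_t.

(* observations are ordered by subject then period: row dimension
   np := \sum_(u < n) p  (= n * p), block u = the p periods of subject u *)
Definition Zmat (n p : nat) : 'M[R]_(\sum_(u < n) p, p) :=
  \mxcol_(u < n) (1%:M : 'M[R]_p).
Definition Umat (n p : nat) : 'M[R]_(\sum_(u < n) p, n) :=
  \mxcol_(u < n) (\matrix_(k < p, v < n) ((u == v)%:R : R)).
Definition Tmat (n p t : nat) (d : design n p t) : 'M[R]_(\sum_(u < n) p, t) :=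
  \mxcol_(u < n) (\matrix_(k < p, i < t) ((d u k == i)%:R : R)).
(* carryover: treatment of the previous period, zero row in period 1 *)
Definition Fmat (n p t : nat) (d : design n p t) : 'M[R]_(\sum_(u < n) p, t) :=
  \mxcol_(u < n) (\matrix_(k < p, i < t)
     (([exists j : 'I_p, (j.+1 == k :> nat) && (d u j == i)])%:R : R)).

(* dropout vector l : l u = number of periods subject u stays (in 1..p) *)
Definition dropvec (n p : nat) := {ffun 'I_n -> 'I_p.+1}.

Definition Mmat (n p : nat) (l : dropvec n p) :
  'M[R]_(\sum_(u < n) (l u : nat), \sum_(u < n) p) :=
  \mxblock_(u < n, v < n) (if u == v then pid_mx (l u) else 0).

Definition subSigma (p : nat) (S : 'M[R]_p) (k : 'I_p.+1) : 'M[R]_k :=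
  \matrix_(i < k, j < k)
     S (widen_ord (ltnSE (ltn_ord k)) i) (widen_ord (ltnSE (ltn_ord k)) j).

Definition Wmat (n p : nat) (S : 'M[R]_p) (l : dropvec n p) :
  'M[R]_(\sum_(u < n) (l u : nat)) :=
  \mxdiag_(u < n) invmx (subSigma S (l u)).

Definition Omat (n p : nat) (S : 'M[R]_p) (l : dropvec n p) :
  'M[R]_(\sum_(u < n) p) :=
  let Wh := msqrt (Wmat S l) in
  let M := Mmat l in
  (M^T *m Wh) *m prperp (row_mx (Wh *m M *m Zmat n p) (Wh *m M *m Umat n p))
    *m (Wh *m M).

Definition C11l n p t (S : 'M[R]_p) (d : design n p t) (l : dropvec n p) :=
  (Tmat d)^T *m Omat S l *m Tmat d.
Definition C12l n p t (S : 'M[R]_p) (d : design n p t) (l : dropvec n p) :=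
  (Tmat d)^T *m Omat S l *m Fmat d.
Definition C21l n p t (S : 'M[R]_p) (d : design n p t) (l : dropvec n p) :=
  (Fmat d)^T *m Omat S l *m Tmat d.
Definition C22l n p t (S : 'M[R]_p) (d : design n p t) (l : dropvec n p) :=
  (Fmat d)^T *m Omat S l *m Fmat d.

(* expectation over l_1,...,l_n i.i.d. with P(l_u = k) = a k, k = 1..p *)
Definition Edrop n p m1 m2 (a : 'I_p.+1 -> R)
  (X : dropvec n p -> 'M[R]_(m1, m2)) : 'M[R]_(m1, m2) :=
  \sum_(l : dropvec n p | [forall u, (0 < (l u : nat))%N])
     (\prod_(u < n) a (l u)) *: X l.

Definition dropout_dist (p : nat) (a : 'I_p.+1 -> R) : Prop :=
  (forall k, 0 <= a k) /\ \sum_(k < p.+1 | (0 < (k : nat))%N) a k = 1.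

Definition Cd n p t (S : 'M[R]_p) (a : 'I_p.+1 -> R) (d : design n p t) : 'M[R]_t :=
  Edrop a (C11l S d) -
  Edrop a (C12l S d) *m ginv (Edrop a (C22l S d)) *m Edrop a (C21l S d).

Definition crit_C1 t (Phi : 'M[R]_t -> R) : Prop :=
  forall (A B : 'M[R]_t) (lam : R), nnd A -> nnd B -> 0 <= lam <= 1 ->
    lam * Phi A + (1 - lam) * Phi B <= Phi (lam *: A + (1 - lam) *: B).
Definition crit_C2 t (Phi : 'M[R]_t -> R) : Prop :=
  forall (C : 'M[R]_t) (s : 'S_t), nnd C ->
    Phi ((perm_mx s)^T *m C *m perm_mx s) = Phi C.
Definition crit_C3 t (Phi : 'M[R]_t -> R) : Prop :=
  forall (C : 'M[R]_t) (b1 b2 : R), nnd C -> 0 < b1 -> b1 <= b2 ->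
    Phi (b1 *: C) <= Phi (b2 *: C).

Definition phi1 n p t (S : 'M[R]_p) (a : 'I_p.+1 -> R) (Phi : 'M[R]_t -> R)
  (d : design n p t) : R := Phi (Cd S a d).

Definition phi1_optimal n p t (S : 'M[R]_p) (a : 'I_p.+1 -> R)
  (Phi : 'M[R]_t -> R) (d : design n p t) : Prop :=
  forall d' : design n p t, phi1 S a Phi d' <= phi1 S a Phi d.

Definition SigmaEta p (eta : 'cV[R]_p) : 'M[R]_p :=
  1%:M + eta *m const_mx 1 + const_mx 1 *m eta^T.

End Crossover.

(* For Sigma = I + eta 1' + 1 eta', every truncation Sigma_k keeps that shape,
   so the covariance of the observed responses is
   V = M (I_n (x) Sigma) M' = I + (M E) (M U)' + (M U) (M E)',
   a symmetric perturbation of the identity along columns M U that lie in the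
   span of the nuisance design X = M [Z | U].  For such a V the generalized
   least squares residual form W - W X (X'WX)^- X'W with W = V^-1 is the
   ordinary projector I - X (X'X)^- X'.  Hence O_Sigma = O_I for every dropout
   pattern, so C_d, and with it phi_1, is the same under both error models. *)

From HB Require Import structures.
From mathcomp Require Import all_boot all_order all_algebra all_fingroup.
From mathcomp Require Import reals complex spectral sesquilinear.
From Stdlib Require Import ClassicalEpsilon.
Set Implicit Arguments. Unset Strict Implicit. Unset Printing Implicit Defensive.
Import Order.TTheory GRing.Theory Num.Theory.
Local Open Scope ring_scope.

Definition posquad (R : numDomainType) N (A : 'M[R]_N) : Prop :=
  forall y : 'rV[R]_N, y != 0 -> 0 < (y *m A *m y^T) 0 0.

Lemma mul_mxdiag (R : pzSemiRingType) k (p_ : 'I_k -> nat)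
    (A_ B_ : forall i, 'M[R]_(p_ i)) :
  \mxdiag_i A_ i *m \mxdiag_i B_ i = \mxdiag_i (A_ i *m B_ i).
Proof.
rewrite {1}/mxdiag mul_mxblock_mxdiag /mxdiag; apply/eq_mxblock => i j.
by case: eqVneq => [<-|_]; rewrite ?conform_mx_id ?mul0mx.
Qed.

Section PositiveQuadraticForms.
Variable R : realFieldType.

Lemma posquad_ge0 N (A : 'M[R]_N) :
  posquad A -> forall x : 'rV[R]_N, 0 <= (x *m A *m x^T) 0 0.
Proof.
move=> pA x; have [->|nx] := eqVneq x 0; last exact/ltW/pA.
by rewrite !mul0mx mxE.
Qed.

Lemma posquad1 N : posquad (1%:M : 'M[R]_N).
Proof.
move=> y ny; rewrite mulmx1 mxE.
have [i yi] : exists i, y 0 i != 0.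
  apply/existsP; apply: contraNT ny; rewrite negb_exists => /forallP y0.
  by apply/eqP/rowP => i; rewrite mxE; apply/eqP; rewrite -[_ == _]negbK y0.
rewrite (bigD1 i) //= mxE ltr_pwDl //.
  by rewrite -expr2 lt_def sqrf_eq0 yi sqr_ge0.
by apply: sumr_ge0 => j _; rewrite mxE -expr2 sqr_ge0.
Qed.

Lemma posquad_unitmx N (A : 'M[R]_N) : posquad A -> A \in unitmx.
Proof.
move=> pA; rewrite -row_free_unit -kermx_eq0; apply/rowV0P => y /sub_kermxP yA0.
by apply/eqP; apply: contraT => /pA; rewrite yA0 mul0mx mxE ltxx.
Qed.

Lemma posquad_congr m N (B : 'M[R]_(m, N)) (S : 'M[R]_N) :
  row_free B -> posquad S -> posquad (B *m S *m B^T).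
Proof.
move=> fB pS y ny.
have -> : y *m (B *m S *m B^T) *m y^T = y *m B *m S *m (y *m B)^T.
  by rewrite trmx_mul !mulmxA.
apply: pS; apply: contra ny => /eqP yB0.
by apply/eqP; apply: (row_free_inj fB); rewrite yB0 mul0mx.
Qed.

Lemma posquad_invmx N (A : 'M[R]_N) : A^T = A -> posquad A -> posquad (invmx A).
Proof.
move=> sA pA; have uA := posquad_unitmx pA.
have -> : invmx A = invmx A *m A *m (invmx A)^T.
  by rewrite trmx_inv sA mulVmx // mul1mx.
by apply: posquad_congr => //; rewrite row_free_unit unitmx_inv.
Qed.

Lemma posquad_mxdiag k (p_ : 'I_k -> nat) (B_ : forall i, 'M[R]_(p_ i)) :
  (forall i, posquad (B_ i)) -> posquad (\mxdiag_i B_ i).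
Proof.
move=> pB y ny.
rewrite -[y]submxrowK mul_mxrow_mxdiag tr_mxrow mul_mxrow_mxcol summxE.
have [i yi] : exists i, submxrow y i != 0.
  apply/existsP; apply: contraNT ny; rewrite negb_exists => /forallP y0.
  rewrite -[y]submxrowK; apply/eqP; rewrite -(mxrow0 (q_ := p_)).
  by apply: eq_mxrow => i; apply/eqP; rewrite -[_ == _]negbK y0.
rewrite (bigD1 i) //= ltr_pwDl ?pB //.
by apply: sumr_ge0 => j _; apply: posquad_ge0.
Qed.

Lemma posquad_gram_eq0 N k (W : 'M[R]_N) (G : 'M[R]_(N, k)) :
  posquad W -> G^T *m W *m G = 0 -> G = 0.
Proof.
move=> pW GWG0; apply: trmx_inj; rewrite trmx0; apply/row_matrixP => j.
rewrite row0; apply/eqP; apply: contraT => /pW.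
have -> : (row j G^T *m W *m (row j G^T)^T) 0 0 = (G^T *m W *m G) j j.
  by rewrite tr_row trmxK -row_mul !mxE; apply: eq_bigr => i _; rewrite !mxE.
by rewrite GWG0 mxE ltxx.
Qed.

Lemma mulmx_pinv_gram N m (W : 'M[R]_N) (X : 'M[R]_(N, m)) : posquad W ->
  X *m pinvmx (X^T *m W *m X) *m (X^T *m W *m X) = X.
Proof.
move=> pW; set A := X^T *m W *m X; set F := X *m (pinvmx A *m A - 1%:M).
have XWF0 : X^T *m W *m F = 0.
  by rewrite /F mulmxA -/A mulmxBr mulmx1 mulmxA mulmxKpV ?subrr.
have F0 : F = 0.
  apply: (posquad_gram_eq0 pW).
  by rewrite {1}/F trmx_mul -(mulmxA _ X^T) -(mulmxA _ (X^T *m W)) XWF0 mulmx0.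
by apply/eqP; rewrite -subr_eq0 -mulmxA -{2}[X]mulmx1 -mulmxBr -/F F0.
Qed.
End PositiveQuadraticForms.

Section Residuals.
Variables (R : realType) (N m : nat) (X : 'M[R]_(N, m)).

Lemma mul_prperp_mx : prperp X *m X = 0.
Proof.
have := mulmx_pinv_gram X (@posquad1 R N); rewrite mulmx1 => XGXX.
by rewrite /prperp /ginv mulmxBl mul1mx -(mulmxA _ X^T) XGXX subrr.
Qed.

Lemma tr_prperp : (prperp X)^T = prperp X.
Proof.
have := mulmx_pinv_gram X (@posquad1 R N); rewrite mulmx1 /prperp /ginv.
move: (pinvmx _) => G XGXX.
have XGtX : X *m G^T *m X^T = X *m G *m X^T.
  have XXGt : X^T *m X *m G^T *m X^T = X^T.
    by have := congr1 trmx XGXX; rewrite !trmx_mul trmxK !mulmxA.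
  by rewrite -{2}XXGt !mulmxA -(mulmxA _ X^T X) XGXX.
by rewrite linearB /= trmx1 !trmx_mul trmxK mulmxA XGtX.
Qed.

Lemma prperp_sqrt_weight (W Wh : 'M[R]_N) : Wh^T = Wh -> Wh *m Wh = W ->
  Wh *m prperp (Wh *m X) *m Wh =
  W - W *m X *m pinvmx (X^T *m W *m X) *m X^T *m W.
Proof.
move=> sWh WhWh; have XWX : (Wh *m X)^T *m (Wh *m X) = X^T *m W *m X.
  by rewrite trmx_mul sWh mulmxA -[X^T *m Wh *m Wh]mulmxA WhWh.
rewrite /prperp /ginv XWX; move: (pinvmx _) => G.
by rewrite mulmxBr mulmxBl mulmx1 WhWh trmx_mul sWh !mulmxA WhWh -mulmxA WhWh.
Qed.

Lemma gls_residual_eq_prperp k (W V : 'M[R]_N) (E : 'M[R]_(N, k))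
    (K : 'M[R]_(m, k)) :
  posquad W -> W *m V = 1%:M ->
  V = 1%:M + E *m (X *m K)^T + (X *m K) *m E^T ->
  W - W *m X *m pinvmx (X^T *m W *m X) *m X^T *m W = prperp X.
Proof.
move=> pW WV1 defV; set G := pinvmx (X^T *m W *m X); set Q := prperp X.
set H := pinvmx (X^T *m X); set C := K *m E^T *m Q.
have XtQ : X^T *m Q = 0 by rewrite /Q -tr_prperp -trmx_mul mul_prperp_mx trmx0.
have VQ : V *m Q = Q + X *m C.
  by rewrite defV !mulmxDl mul1mx trmx_mul -!mulmxA XtQ !mulmx0 addr0 !mulmxA.
have WQ : W - Q = W *m X *m (H *m X^T - C).
  have defW : W = W *m Q + W *m (X *m H *m X^T).
    by rewrite -mulmxDr /Q /prperp /ginv subrK mulmx1.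
  have defQ : Q = W *m Q + W *m X *m C.
    by rewrite -mulmxA -mulmxDr -VQ mulmxA WV1 mul1mx.
  rewrite {1}defW {2}defQ opprD addrACA subrr add0r mulmxBr.
  by rewrite -(mulmxA W X) -(mulmxA X H) mulmxA.
have XtW : X^T *m W = X^T *m W *m X *m (H *m X^T - C).
  by rewrite -(mulmxA X^T W X) -(mulmxA X^T) -WQ mulmxBr XtQ subr0.
have WXGXW : W *m X *m G *m X^T *m W = W - Q.
  rewrite -(mulmxA _ X^T) XtW (mulmxA (W *m X *m G)) -(mulmxA W X G).
  by rewrite -(mulmxA W) mulmx_pinv_gram // WQ.
by rewrite WXGXW opprB addrC subrK.
Qed.
End Residuals.

Section SubSigma.
Variables (R : realType) (p : nat) (S : 'M[R]_p).

Lemma subSigmaE (k : 'I_p.+1) :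
  subSigma S k = (pid_mx k : 'M_(k, p)) *m S *m pid_mx k.
Proof.
have kp : (k <= p)%N by rewrite -ltnS ltn_ord.
rewrite -[X in _ *m X](@tr_pid_mx R k p k) (pid_mxErow _ kp) mul_rowsub_mx mul1mx.
apply/matrixP => i j; rewrite !mxE (bigD1 (widen_ord kp j)) //= big1.
  by rewrite !mxE eqxx mulr1 addr0; congr (S _ _); apply: val_inj.
move=> b /negP bj; rewrite !mxE; case: eqP => [ebj|]; last by rewrite mulr0.
by case: bj; apply/eqP/val_inj; rewrite /= -ebj.
Qed.

Lemma tr_subSigma (k : 'I_p.+1) : S^T = S -> (subSigma S k)^T = subSigma S k.
Proof. by move=> sS; rewrite subSigmaE !trmx_mul !tr_pid_mx sS mulmxA. Qed.

Lemma posquad_subSigma (k : 'I_p.+1) : posquad S -> posquad (subSigma S k).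
Proof.
have kp : (k <= p)%N by rewrite -ltnS ltn_ord.
rewrite subSigmaE -[X in _ *m X](@tr_pid_mx R k p k); apply: posquad_congr.
by rewrite /row_free rank_pid_mx.
Qed.
End SubSigma.

Section DropoutBlocks.
Variables (R : realType) (n p : nat) (l : dropvec n p).
Local Notation M := (Mmat R l).

Lemma dropvec_le u : (l u <= p)%N.
Proof. by rewrite -ltnS ltn_ord. Qed.

Lemma Mmat_mxdiag_tr (B_ : 'I_n -> 'M[R]_p) :
  M *m \mxdiag_(u < n) B_ u *m M^T =
  \mxdiag_(u < n) ((pid_mx (l u) : 'M_(l u, p)) *m B_ u *m pid_mx (l u)).
Proof.
rewrite /Mmat mul_mxblock_mxdiag tr_mxblock mul_mxblock /mxdiag.
apply/eq_mxblock => u w; case: eqVneq => [<-|uw].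
  rewrite conform_mx_id (bigD1 u) //= eqxx big1 ?addr0 ?tr_pid_mx //.
  by move=> v /negPf vu; rewrite eq_sym vu !mul0mx.
apply: big1 => v _; case: eqVneq => [<-|_]; last by rewrite !mul0mx.
by rewrite eq_sym (negPf uw) trmx0 mulmx0.
Qed.

Lemma Mmat_mul_tr : M *m M^T = 1%:M.
Proof.
have := Mmat_mxdiag_tr (fun _ => 1%:M).
rewrite (mxdiagZ (p_ := fun _ => p)) mulmx1 => ->.
rewrite -(mxdiagZ (p_ := fun u => (l u : nat))); apply: eq_mxdiag => u.
by rewrite mulmx1 pid_mx_id ?dropvec_le // pid_mx_1.
Qed.

Definition Vmat (S : 'M[R]_p) := \mxdiag_(u < n) subSigma S (l u).

Lemma Vmat_Mmat (S : 'M[R]_p) : Vmat S = M *m \mxdiag_(u < n) S *m M^T.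
Proof. by rewrite Mmat_mxdiag_tr; apply: eq_mxdiag => u; rewrite subSigmaE. Qed.

Lemma Wmat_mul_Vmat (S : 'M[R]_p) : posquad S -> Wmat S l *m Vmat S = 1%:M.
Proof.
move=> pS; rewrite /Wmat /Vmat mul_mxdiag -(mxdiagZ (p_ := fun u => (l u : nat))).
by apply: eq_mxdiag => u; rewrite mulVmx //; apply/posquad_unitmx/posquad_subSigma.
Qed.

Lemma tr_Wmat (S : 'M[R]_p) : S^T = S -> (Wmat S l)^T = Wmat S l.
Proof.
move=> sS; rewrite /Wmat tr_mxdiag; apply: eq_mxdiag => u.
by rewrite trmx_inv tr_subSigma.
Qed.

Lemma posquad_Wmat (S : 'M[R]_p) : posdef S -> posquad (Wmat S l).
Proof.
case=> sS pS; apply: posquad_mxdiag => u.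
by apply: posquad_invmx; [apply: tr_subSigma | apply: posquad_subSigma].
Qed.
End DropoutBlocks.

Section SigmaEtaBlocks.
Variables (R : realType) (n p : nat) (eta : 'cV[R]_p).

Definition Etamat : 'M[R]_(\sum_(u < n) p, n) :=
  \mxcol_(u < n) (\matrix_(k < p, v < n) ((u == v)%:R * eta k 0)).

Lemma mxdiag_SigmaEta :
  \mxdiag_(u < n) SigmaEta eta =
  1%:M + Etamat *m (Umat R n p)^T + Umat R n p *m Etamat^T.
Proof.
have delta_sum (u w : 'I_n) (c : R) :
    \sum_(v < n) ((u == v)%:R * c) * (w == v)%:R = (u == w)%:R * c.
  rewrite (bigD1 u) //= big1 => [|v vu]; last by rewrite eq_sym (negPf vu) !mul0r.
  by rewrite eqxx mul1r addr0 eq_sym mulrC.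
rewrite /Umat /Etamat !tr_mxcol !mul_mxcol_mxrow.
rewrite -(mxdiagZ (p_ := fun _ => p) 1) /mxdiag -!mxblockD.
apply/eq_mxblock => u w; apply/matrixP => i j; rewrite !mxE.
under eq_bigr do rewrite !mxE.
under [X in _ = _ + _ + X]eq_bigr do rewrite !mxE mulrC.
rewrite !delta_sum [(w == u)%:R * _]mulrC eq_sym.
have [_|uw] := eqVneq w u; last by rewrite mxE !mul0r mulr0 !addr0.
by rewrite !conform_mx_id /SigmaEta !mxE !big_ord1 !mxE !mulr1 !mul1r.
Qed.
End SigmaEtaBlocks.

Lemma poly_interpolation (F : fieldType) (f : F -> F) (s : seq F) :
  exists q : {poly F}, {in s, forall x, q.[x] = f x}.
Proof.
elim: s => [|a s [q qf]]; first by exists 0.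
have [as_|aNs] := boolP (a \in s).
  by exists q => x; rewrite inE => /predU1P [->|]; apply: qf.
pose c := \prod_(b <- s) (a - b).
have c_neq0 : c != 0.
  rewrite prodf_seq_neq0; apply/allP => b bs /=; rewrite subr_eq0.
  by apply: contraNneq aNs => ->.
exists (q + ((f a - q.[a]) / c) *: \prod_(b <- s) ('X - b%:P)) => x.
rewrite inE hornerD hornerZ horner_prod => /predU1P [->|xs].
  under eq_bigr do rewrite hornerXsubC.
  by rewrite divfK // addrC subrK.
have -> : \prod_(b <- s) ('X - b%:P).[x] = 0.
  apply/eqP; rewrite prodf_seq_eq0; apply/hasP.
  by exists x => //=; rewrite hornerXsubC subrr.
by rewrite mulr0 addr0 qf.
Qed.

Section SymmetricSquareRoot.
Variable R : rcfType.
Local Notation C := R[i].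
Local Notation toC := (real_complex R).
Local Notation mC := (map_mx toC).
Local Open Scope sesquilinear_scope.

Lemma conj_real_complex (x : R) : (toC x)^* = toC x.
Proof. by apply: conj_Creal; rewrite complex_real. Qed.

Lemma nnd_complex_form k (A : 'M[R]_k) : A^T = A ->
  (forall x : 'rV[R]_k, 0 <= (x *m A *m x^T) 0 0) ->
  forall v : 'rV[C]_k, 0 <= (v *m mC A *m v^t*) 0 0.
Proof.
move=> sA nA v.
set a := map_mx (@complex.Re R) v; set b := map_mx (@complex.Im R) v.
have defv : v = mC a + 'i *: mC b.
  by apply/rowP => j; rewrite !mxE -complexiE; apply: complexE.
have defvt : v^t* = (mC a)^T - 'i *: (mC b)^T.
  apply/matrixP => i j; rewrite !mxE {1}[v j i]complexE rmorphD rmorphM /=.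
  by rewrite !conj_real_complex -complexiE conjCi mulNr.
have form_sym (x y : 'rV[R]_k) :
    mC x *m mC A *m (mC y)^T = mC y *m mC A *m (mC x)^T.
  rewrite !map_trmx -!map_mxM; congr (map_mx _ _).
  have tr11 (B : 'M[R]_1) : B^T = B by apply/matrixP => i j; rewrite mxE !ord1.
  by rewrite -[LHS]tr11 !trmx_mul trmxK sA mulmxA.
have form_real (x : 'rV[R]_k) :
    mC x *m mC A *m (mC x)^T = mC (x *m A *m x^T).
  by rewrite !map_trmx -!map_mxM.
rewrite defvt {1}defv !mulmxDl !mulmxBr -!scalemxAl -!scalemxAr.
rewrite (form_sym b a) addrA subrK scalerA -expr2 sqrCi scaleN1r opprK !form_real.
by rewrite -map_mxD mxE ler0c mxE addr_ge0.
Qed.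

Lemma tr_horner_mx k (A : 'M[R]_k.+1) q : (horner_mx A q)^T = horner_mx A^T q.
Proof.
elim/poly_ind: q => [|q c IHq]; first by rewrite !rmorph0 trmx0.
rewrite !rmorphD !rmorphM /= !horner_mx_X !horner_mx_C.
rewrite -!mulmxE linearD /= tr_scalar_mx trmx_mul IHq; congr (_ + _).
by have := @comm_mx_horner _ _ A^T A^T q erefl.
Qed.

Lemma nnd_spectral k (A : 'M[R]_k.+1) : A^T = A ->
  (forall x : 'rV[R]_k.+1, 0 <= (x *m A *m x^T) 0 0) ->
  exists2 P : 'M[C]_k.+1, P \is unitarymx &
    exists2 r : 'rV[R]_k.+1, (forall j, 0 <= r 0 j) &
      mC A = P^t* *m diag_mx (map_mx toC r) *m P.
Proof.
move=> sA nA; set Ac := mC A.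
have Ac_herm : Ac \is hermsymmx.
  rewrite is_hermitianmxE expr0 scale1r; apply/eqP/matrixP => i j.
  by rewrite !mxE conj_real_complex -{1}sA mxE.
have : Ac = invmx (spectralmx Ac) *m diag_mx (spectral_diag Ac) *m spectralmx Ac.
  exact/orthomx_spectralP/hermitian_normalmx.
set P := spectralmx Ac; set d := spectral_diag Ac => defAc.
have Pu : P \is unitarymx := spectral_unitarymx Ac.
have PPt : P *m P^t* = 1%:M := unitarymxP Pu.
rewrite invmx_unitary // in defAc.
set r := map_mx (@complex.Re R) d.
have dr : d = map_mx toC r.
  apply/rowP => j; rewrite !mxE RRe_real //.
  exact: mxOverP (hermitian_spectral_diag_real Ac_herm) 0 j.
rewrite dr in defAc; exists P => //; exists r => // j; rewrite -ler0c.
have -> : toC (r 0 j) = (row j P *m Ac *m (row j P)^t*) 0 0.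
  transitivity ((P *m Ac *m P^t*) j j).
    by rewrite defAc !mulmxA PPt mul1mx -mulmxA PPt mulmx1 !mxE eqxx mulr1n.
  rewrite !mxE; apply: eq_bigr => h _; rewrite !mxE; congr (_ * _).
  by apply: eq_bigr => g _; rewrite !mxE.
exact: nnd_complex_form.
Qed.

Lemma nnd_sqrt_exists k (A : 'M[R]_k) : A^T = A ->
  (forall x : 'rV[R]_k, 0 <= (x *m A *m x^T) 0 0) ->
  exists S : 'M[R]_k, [/\ S^T = S,
    (forall x : 'rV[R]_k, 0 <= (x *m S *m x^T) 0 0) & S *m S = A].
Proof.
case: k A => [|k] A sA nA.
  by exists A; split=> //; apply/matrixP => -[].
(* [S] is a real polynomial in [A] interpolating the square root on the
   eigenvalues, hence real although the diagonalization is complex. *)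
have [P Pu [r r_ge0 defA]] := nnd_spectral sA nA.
have PPt : P *m P^t* = 1%:M := unitarymxP Pu.
have [q qE] := poly_interpolation Num.sqrt [seq r 0 j | j <- enum 'I_k.+1].
set sr := \row_j toC (Num.sqrt (r 0 j)).
have sr2 : diag_mx sr *m diag_mx sr = diag_mx (map_mx toC r).
  rewrite mulmx_diag; congr diag_mx; apply/rowP => j.
  by rewrite !mxE -rmorphM -expr2 sqr_sqrtr ?r_ge0.
have defS : mC (horner_mx A q) = P^t* *m diag_mx sr *m P.
  rewrite map_horner_mx defA -(invmx_unitary Pu); set qC := map_poly _ q.
  rewrite (horner_mx_uconjC qC _ (unitarymx_unit Pu)) horner_mx_diag.
  set hd := map_mx _ _; have -> // : hd = sr.
  by apply/rowP => j; rewrite !mxE horner_map qE //; apply: map_f; rewrite mem_enum.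
exists (horner_mx A q); split.
- by rewrite tr_horner_mx sA.
- move=> x; rewrite -ler0c.
  have -> : toC ((x *m horner_mx A q *m x^T) 0 0) =
            (mC x *m mC (horner_mx A q) *m (mC x)^t*) 0 0.
    have xt : (mC x)^t* = mC x^T.
      by apply/matrixP => i j; rewrite !mxE conj_real_complex.
    by rewrite xt -!map_mxM [RHS]mxE.
  rewrite defS !mulmxA; set w := mC x *m P^t*.
  have -> : mC x *m P^t* *m diag_mx sr *m P *m (mC x)^t* = w *m diag_mx sr *m w^t*.
    by rewrite /w trmx_mul map_mxM trmxCK !mulmxA.
  rewrite mul_mx_diag !mxE; apply: sumr_ge0 => j _; rewrite !mxE mulrAC.
  by rewrite mulr_ge0 ?mul_conjC_ge0 // ler0c sqrtr_ge0.
- apply: (@map_mx_inj _ _ toC); rewrite map_mxM defS defA.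
  by rewrite -!mulmxA (mulmxA P) PPt mul1mx (mulmxA (diag_mx sr)) sr2 !mulmxA.
Qed.
End SymmetricSquareRoot.

Lemma msqrt_spec (R : realType) k (A : 'M[R]_k) :
  nnd A -> nnd (msqrt A) /\ msqrt A *m msqrt A = A.
Proof.
case=> sA nA; apply: (epsilon_spec _ (fun S => nnd S /\ S *m S = A)).
by have [S [sS nS SS]] := nnd_sqrt_exists sA nA; exists S.
Qed.

Section OmatSigmaEta.
Variables (R : realType) (n p : nat) (l : dropvec n p) (eta : 'cV[R]_p).
Local Notation M := (Mmat R l).
Local Notation X := (Mmat R l *m row_mx (Zmat R n p) (Umat R n p)).

Lemma Omat_SigmaEta : posdef (SigmaEta eta) ->
  Omat (SigmaEta eta) l = M^T *m prperp X *m M.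
Proof.
move=> pdS; have [sS pS] := pdS; set W := Wmat (SigmaEta eta) l.
have pW : posquad W := posquad_Wmat pdS.
have XK : X *m col_mx 0 1%:M = M *m Umat R n p.
  by rewrite -mulmxA mul_row_col mulmx0 add0r mulmx1.
have defV : Vmat l (SigmaEta eta) =
    1%:M + (M *m Etamat n eta) *m (X *m col_mx 0 1%:M)^T
         + (X *m col_mx 0 1%:M) *m (M *m Etamat n eta)^T.
  by rewrite Vmat_Mmat mxdiag_SigmaEta XK !mulmxDr !mulmxDl mulmx1 Mmat_mul_tr
    !trmx_mul !mulmxA.
have [[sWh _] WhWh] := msqrt_spec (conj (tr_Wmat l sS) (posquad_ge0 pW)).
rewrite -(gls_residual_eq_prperp pW (Wmat_mul_Vmat l pS) defV).
rewrite -(prperp_sqrt_weight _ sWh WhWh) /Omat -/W -mul_mx_row -(mulmxA _ M).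
by rewrite !mulmxA.
Qed.
End OmatSigmaEta.

Lemma Omat_SigmaEta_eq1 (R : realType) n p (l : dropvec n p) (eta : 'cV[R]_p) :
  posdef (SigmaEta eta) -> Omat (SigmaEta eta) l = Omat 1%:M l.
Proof.
have eta0 : SigmaEta (0 : 'cV[R]_p) = 1%:M.
  by rewrite /SigmaEta !mul0mx trmx0 mulmx0 !addr0.
move=> pdS; rewrite Omat_SigmaEta // -eta0 Omat_SigmaEta // eta0.
by split; [apply: trmx1 | apply: posquad1].
Qed.

Lemma eq_Edrop (R : realType) n p m1 m2 (a : 'I_p.+1 -> R)
    (X Y : dropvec n p -> 'M[R]_(m1, m2)) :
  X =1 Y -> Edrop a X = Edrop a Y.
Proof. by move=> eqXY; apply: eq_bigr => l _; rewrite eqXY. Qed.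

Lemma eq_Cd (R : realType) n p t (S S' : 'M[R]_p) (a : 'I_p.+1 -> R)
    (d : design n p t) :
  Omat S =1 Omat S' :> (dropvec n p -> _) -> Cd S a d = Cd S' a d.
Proof.
move=> eqO.
have E11 : Edrop a (C11l S d) = Edrop a (C11l S' d).
  by apply: eq_Edrop => l; rewrite /C11l eqO.
have E12 : Edrop a (C12l S d) = Edrop a (C12l S' d).
  by apply: eq_Edrop => l; rewrite /C12l eqO.
have E21 : Edrop a (C21l S d) = Edrop a (C21l S' d).
  by apply: eq_Edrop => l; rewrite /C21l eqO.
have E22 : Edrop a (C22l S d) = Edrop a (C22l S' d).
  by apply: eq_Edrop => l; rewrite /C22l eqO.
(* [rewrite] would try to unify the distinct [Edrop] terms and unfold huge
   block matrices; rebuilding [Cd] by congruence avoids that search. *)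
exact: (f_equal4 (fun A B C D => A - B *m ginv C *m D) E11 E12 E22 E21).
Qed.

Theorem corollary2p1 (R : realType) (n p t : nat) (a : 'I_p.+1 -> R)
  (Phi : 'M[R]_t -> R) (eta : 'cV[R]_p) (d : design n p t) :
  dropout_dist a ->
  crit_C1 Phi -> crit_C2 Phi -> crit_C3 Phi ->
  posdef (SigmaEta eta) ->
  phi1_optimal 1%:M a Phi d ->
  phi1_optimal (SigmaEta eta) a Phi d.
Proof.
move=> _ _ _ _ pdS d_opt d'.
have eqCd d0 : Cd (SigmaEta eta) a d0 = Cd 1%:M a d0.
  by apply: eq_Cd => l; apply: Omat_SigmaEta_eq1.
by rewrite /phi1 !eqCd; apply: d_opt.
Qed.
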